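(* For each instance \(\mathcal{I}\) of 3-SAT, the graph \(G(\mathcal{I})\) constructed below is weakly chordal.
   Context: A graph is weakly chordal if neither it nor its complement contains an induced cycle of length at least 5. Let \(\mathcal{I}\) have variables \(x_1,\dots,x_k\) and clauses \(C_1,\dots,C_l\), each a disjunction of three literals. \(G(\mathcal{I})\) has vertices: literal vertices \(X=\{x_1,\dots,x_k,\overline{x_1},\dots,\overline{x_k}\}\); for each clause \(C_i\) three vertices \(a_i,c_i,t_i\); and four vertices \(r,p,q,u\). Edges: any two vertices of \(X\) are adjacent except the pairs \(x_j\overline{x_j}\); each \(\{a_i,c_i,t_i\}\) is a triangle; \(c_i\) is adjacent to the literal vertices of the literals occurring in \(C_i\); \(r\) is adjacent to every vertex except \(u\) and the \(t_i\); \(u\) is adjacent to every vertex except \(r\) and the \(t_i\); \(p\) is adjacent to every vertex of \(X\) and to \(q\); \(q\) is adjacent to every vertex of \(X\) and to every \(a_i\); there are no other edges. *)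

From HB Require Import structures.
From mathcomp Require Import all_boot.
Set Implicit Arguments. Unset Strict Implicit. Unset Printing Implicit Defensive.

Definition induced_cycle (V : finType) (e : rel V) (n : nat) (v : 'I_n -> V) :=
  injective v /\
  forall i j : 'I_n,
    e (v i) (v j) = ((j : nat) == (i.+1 %% n)) || ((i : nat) == (j.+1 %% n)).

Definition has_induced_cycle_ge5 (V : finType) (e : rel V) :=
  exists n (v : 'I_n -> V), 5 <= n /\ induced_cycle e v.

Definition compl_rel (V : finType) (e : rel V) : rel V :=
  fun x y => (x != y) && ~~ e x y.

Definition weakly_chordal (V : finType) (e : rel V) :=
  ~ has_induced_cycle_ge5 e /\ ~ has_induced_cycle_ge5 (compl_rel e).

(* A literal over variables x_0..x_{k-1}: (i, true) is x_i, (i, false) is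
   the negation of x_i. *)
Definition literal (k : nat) := ('I_k * bool)%type.

(* An instance with k variables and l clauses; clause j is the disjunction
   of the three literals cl j 0, cl j 1, cl j 2. *)
Record sat3_instance := Sat3 {
  nvars : nat;
  nclauses : nat;
  clause : 'I_nclauses -> 'I_3 -> literal nvars
}.

Definition occurs (I : sat3_instance) (j : 'I_(nclauses I)) (x : literal (nvars I)) :=
  [exists m : 'I_3, @clause I j m == x].

Inductive vertex (k l : nat) :=
| VLit of 'I_k & bool
| VA of 'I_l
| VC of 'I_l
| VT of 'I_l
| VR | VP | VQ | VU.

Arguments VLit {k l}. Arguments VA {k l}. Arguments VC {k l}. Arguments VT {k l}.
Arguments VR {k l}. Arguments VP {k l}. Arguments VQ {k l}. Arguments VU {k l}.

Section VertexFin.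
Variables k l : nat.

Definition vcode (v : vertex k l) : ('I_k * bool) + ('I_3 * 'I_l) + 'I_4 :=
  match v with
  | VLit i b => inl (inl (i, b))
  | VA j => inl (inr (ord0, j))
  | VC j => inl (inr (inord 1, j))
  | VT j => inl (inr (inord 2, j))
  | VR => inr ord0
  | VP => inr (inord 1)
  | VQ => inr (inord 2)
  | VU => inr (inord 3)
  end.

Definition vdecode (c : ('I_k * bool) + ('I_3 * 'I_l) + 'I_4) : option (vertex k l) :=
  match c with
  | inl (inl (i, b)) => Some (VLit i b)
  | inl (inr (m, j)) =>
      match val m with 0 => Some (VA j) | 1 => Some (VC j) | _ => Some (VT j) end
  | inr m =>
      match val m with 0 => Some VR | 1 => Some VP | 2 => Some VQ | _ => Some VU end
  end.

Lemma vcodeK : pcancel vcode vdecode.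
Proof. by case=> //= *; rewrite inordK. Qed.

HB.instance Definition _ := Finite.copy (vertex k l) (pcan_type vcodeK).
End VertexFin.

(* One-directional description of the edges, exactly as listed in the
   construction; the edge relation is its symmetric, irreflexive closure. *)
Definition base_adj (I : sat3_instance) (x y : vertex (nvars I) (nclauses I)) : bool :=
  match x, y with
  | VLit i _, VLit i' _ => i != i'
  | VA j, VC j' | VA j, VT j' | VC j, VT j' => j == j'
  | VC j, VLit i b => @occurs I j (i, b)
  | VR, VU | VR, VT _ => false
  | VR, _ => true
  | VU, VR | VU, VT _ => false
  | VU, _ => true
  | VP, VLit _ _ | VP, VQ => true
  | VQ, VLit _ _ | VQ, VA _ => true
  | _, _ => false
  end.

Definition G_adj (I : sat3_instance) : rel (vertex (nvars I) (nclauses I)) :=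
  fun x y => (x != y) && (base_adj x y || base_adj y x).
Arguments G_adj : clear implicits.

From mathcomp Require Import all_boot.
Set Implicit Arguments. Unset Strict Implicit. Unset Printing Implicit Defensive.

(* Every vertex x of a hole or an antihole of length at least 5 is the middle
   of an induced path y - x - z of the cycle and is non-adjacent to both ends
   of an edge of the cycle. In G(I) these two local conditions alone exclude,
   one after the other, the vertices t_j (their two neighbours are adjacent),
   r and u (their non-neighbours are pairwise non-adjacent), q (once the t_j
   are gone, its remaining non-neighbours are the pairwise non-adjacent c_j),
   the a_j (c_j is their only neighbour left) and p (as for q). What remains
   are literal and clause vertices, and not literals only: the literals
   non-adjacent to a literal share its variable, so are pairwise
   non-adjacent. A clause vertex, in turn, is excluded by following the cycle
   for a few steps. *)

Section LocalShape.
Variables (V : finType) (e : rel V) (S : seq V).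

Definition has_nonadjacent_neighbours (x : V) :=
  exists y z, [&& y \in S, z \in S, y != z, e x y, e x z & ~~ e y z].

Definition has_adjacent_nonneighbours (x : V) :=
  exists y z, [&& y \in S, z \in S, ~~ e x y, ~~ e x z & e y z].

Definition locally_cyclic :=
  {in S, forall x, has_nonadjacent_neighbours x /\ has_adjacent_nonneighbours x}.

End LocalShape.

Lemma compl_relN (V : finType) (e : rel V) x y :
  x != y -> ~~ compl_rel e x y = e x y.
Proof. by rewrite /compl_rel => ->; rewrite negbK. Qed.

Section CyclicWalk.
Variables (V : finType) (n : nat) (v : 'I_n -> V).
Hypothesis n_ge5 : 4 < n.

Let n_gt0 : 0 < n. Proof. exact: leq_ltn_trans n_ge5. Qed.

Definition walk (m : nat) : V := v (Ordinal (ltn_pmod m n_gt0)).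

Lemma walk_codom m : walk m \in codom v.
Proof. exact: codom_f. Qed.

Lemma walk_ord (i : 'I_n) : walk i = v i.
Proof. by congr v; apply: val_inj; rewrite /= modn_small. Qed.

Lemma walk_pred m : walk m = walk (m + n.-1).+1.
Proof. by congr v; apply: val_inj; rewrite /= -addnS prednK // modnDr. Qed.

Section Relation.
Variables (e : rel V) (v_cycle : induced_cycle e v).

Lemma walk_adjE m d :
  e (walk m) (walk (m + d)) = (d %% n == 1 %% n) || ((d + 1) %% n == 0).
Proof.
rewrite v_cycle.2 /= -[(m %% n).+1]addn1 -[((m + d) %% n).+1]addn1.
rewrite !modnDml eqn_modDl -addnA -{1}[m]addn0 eqn_modDl mod0n.
by rewrite [0 == _]eq_sym.
Qed.

Lemma walkC m m' : e (walk m) (walk m') = e (walk m') (walk m).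
Proof. by rewrite !v_cycle.2 orbC. Qed.

Lemma walk_adj1 m : e (walk m) (walk m.+1).
Proof. by rewrite -addn1 walk_adjE eqxx. Qed.

Lemma walk_nadj2 m : ~~ e (walk m) (walk m.+2).
Proof. by rewrite -addn2 walk_adjE !modn_small // (leq_trans _ n_ge5). Qed.

Lemma walk_nadj3 m : ~~ e (walk m) (walk m.+3).
Proof. by rewrite -addn3 walk_adjE !modn_small // (leq_trans _ n_ge5). Qed.

Lemma walk_neq m d : 0 < d < 5 -> walk (d + m) != walk m.
Proof.
case/andP=> d_gt0 d_lt5; apply/eqP => /v_cycle.1 /(congr1 val) /= /eqP.
rewrite -{2}[m]add0n eqn_modDr mod0n modn_small ?(leq_trans d_lt5) //.
by rewrite eqn0Ngt d_gt0.
Qed.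

End Relation.

Variable e : rel V.

Section Antihole.
Hypothesis v_cocycle : induced_cycle (compl_rel e) v.

Lemma antiwalk_nadj1 m : ~~ e (walk m) (walk m.+1).
Proof. by case/andP: (walk_adj1 v_cocycle m). Qed.

Lemma antiwalk_adj2 m : e (walk m) (walk m.+2).
Proof.
rewrite -compl_relN ?(walk_nadj2 v_cocycle) //.
by rewrite eq_sym (walk_neq v_cocycle m (d:=2)).
Qed.

Lemma antiwalk_adj3 m : e (walk m) (walk m.+3).
Proof.
rewrite -compl_relN ?(walk_nadj3 v_cocycle) //.
by rewrite eq_sym (walk_neq v_cocycle m (d:=3)).
Qed.

End Antihole.

Lemma hole_locally_cyclic : induced_cycle e v -> locally_cyclic e (codom v).
Proof.
move=> v_cycle _ /codomP[i ->]; rewrite -walk_ord; split.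
  rewrite walk_pred; set m := i + n.-1; exists (walk m), (walk m.+2).
  rewrite !walk_codom eq_sym (walk_neq v_cycle m (d:=2)) // (walkC v_cycle).
  by rewrite !walk_adj1 // walk_nadj2.
exists (walk i.+2), (walk i.+3).
by rewrite !walk_codom walk_nadj2 // walk_nadj3 // walk_adj1.
Qed.

Lemma antihole_locally_cyclic :
  induced_cycle (compl_rel e) v -> locally_cyclic e (codom v).
Proof.
move=> v_cocycle _ /codomP[i ->]; rewrite -walk_ord; split.
  exists (walk i.+2), (walk i.+3); rewrite !walk_codom (antiwalk_nadj1 v_cocycle).
  rewrite eq_sym (walk_neq v_cocycle i.+2 (d:=1)) //.
  by rewrite antiwalk_adj2 // antiwalk_adj3.
rewrite walk_pred; set m := i + n.-1; exists (walk m), (walk m.+2).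
have /andP[_ ->] : compl_rel e (walk m.+1) (walk m).
  by rewrite (walkC v_cocycle) walk_adj1.
by rewrite !walk_codom antiwalk_nadj1 // antiwalk_adj2.
Qed.

End CyclicWalk.

Ltac decide_constraints := move=> *; repeat match goal with
  | H : is_true (~~ ~~ _) |- _ => rewrite negbK in H
  | H : is_true (_ && _) |- _ => case/andP: H => ? ?
  | H : is_true (?a != ?a) |- _ => by rewrite eqxx in H
  | H : is_true (?a == ?a) |- _ => clear H
  | H : is_true (_ == _) |- _ => move/eqP: H => H; subst
  end;
  repeat match goal with H : is_true _ |- _ => revert H end;
  repeat match goal with b : bool |- _ => revert b end;
  rewrite ?eqxx /=; by do ![case=> /= | move=> _].

Section GraphOfInstance.
Variable I : sat3_instance.
Local Notation V := (vertex (nvars I) (nclauses I)).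
Local Notation G := (G_adj I).

Definition adj (x y : V) : bool :=
  match x, y with
  | VLit i _, VLit i' _ => i != i'
  | VA j, VC j' | VA j, VT j' | VC j, VT j'
  | VC j, VA j' | VT j, VA j' | VT j, VC j' => j == j'
  | VC j, VLit i b | VLit i b, VC j => occurs j (i, b)
  | VR, VU | VU, VR | VR, VR | VU, VU
  | VR, VT _ | VT _, VR | VU, VT _ | VT _, VU => false
  | VR, _ | _, VR | VU, _ | _, VU => true
  | VP, VLit _ _ | VLit _ _, VP | VP, VQ | VQ, VP
  | VQ, VLit _ _ | VLit _ _, VQ | VQ, VA _ | VA _, VQ => true
  | _, _ => false
  end.

Lemma G_adjE x y : G x y = adj x y.
Proof.
rewrite /G_adj; case: x => [i b|j|j|j||||]; case: y => [i' b'|j'|j'|j'||||] /=;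
  rewrite ?eqxx ?orbF ?andbF ?[_ == j]eq_sym //=; try by case: eqP.
by case: eqP => [[-> _]|_] /=; rewrite ?eqxx // (eq_sym i') orbb.
Qed.

Lemma eq_VLit i b i' b' : (VLit i b == VLit i' b' :> V) = (i == i') && (b == b').
Proof. by apply/eqP/andP => [[-> ->]|[/eqP-> /eqP->]]. Qed.

Definition is_lit (x : V) := if x is VLit _ _ then true else false.
Definition is_clause (x : V) := if x is VC _ then true else false.

Section LocallyCyclicSet.
Variable S : seq V.
Hypothesis S_cyclic : locally_cyclic G S.

Let S_nbrs x (xS : x \in S) := (S_cyclic xS).1.
Let S_nonnbrs x (xS : x \in S) := (S_cyclic xS).2.

Lemma VT_notin j : VT j \notin S.
Proof.
apply/negP => /S_nbrs[y [z /and5P[_ _ yz]]]; rewrite !G_adjE.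
by case: y yz => // j1; case: z => // j2 /=; decide_constraints.
Qed.

Lemma VR_notin : VR \notin S.
Proof.
apply/negP => /S_nonnbrs[y [z /and5P[_ _]]]; rewrite !G_adjE.
by case: y => //; case: z.
Qed.

Lemma VU_notin : VU \notin S.
Proof.
apply/negP => /S_nonnbrs[y [z /and5P[_ _]]]; rewrite !G_adjE.
by case: y => //; case: z.
Qed.

Lemma VQ_notin : VQ \notin S.
Proof.
apply/negP => /S_nonnbrs[y [z /and5P[yS zS]]]; rewrite !G_adjE.
case: y yS => [? ?|?|?|?||||] yS; case: z zS => [? ?|?|?|?||||] zS //=.
all: by rewrite ?(negPf (VT_notin _)) in yS zS.
Qed.

Lemma VA_notin j : VA j \notin S.
Proof.
apply/negP => /S_nbrs[y [z /and5P[yS zS]]]; rewrite !G_adjE.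
case: y yS => [? ?|?|?|?||||] yS; case: z zS => [? ?|?|?|?||||] zS //=.
all: rewrite ?(negPf (VT_notin _)) ?(negPf VR_notin) ?(negPf VU_notin)
  ?(negPf VQ_notin) // in yS zS.
all: decide_constraints.
Qed.

Lemma VP_notin : VP \notin S.
Proof.
apply/negP => /S_nonnbrs[y [z /and5P[yS zS]]]; rewrite !G_adjE.
case: y yS => [? ?|?|?|?||||] yS; case: z zS => [? ?|?|?|?||||] zS //=.
all: by rewrite ?(negPf (VT_notin _)) ?(negPf (VA_notin _)) in yS zS.
Qed.

Lemma locally_cyclic_lit_or_clause : {in S, forall x, is_lit x || is_clause x}.
Proof.
case=> // [j|j||||] xS.
all: by rewrite ?(negPf (VT_notin _)) ?(negPf VR_notin) ?(negPf VU_notin)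
  ?(negPf VQ_notin) ?(negPf (VA_notin _)) ?(negPf VP_notin) in xS.
Qed.

Lemma locally_cyclic_has_clause x : x \in S -> exists j, VC j \in S.
Proof.
move=> xS; apply/existsP; apply: contraT; rewrite negb_exists => /forallP noC.
have lit y : y \in S -> is_lit y.
  move=> yS; move: (locally_cyclic_lit_or_clause yS) (noC).
  by case: y yS => // j yS _ /(_ j); rewrite yS.
case: (S_nonnbrs xS) => y [z /and5P[yS zS]]; rewrite !G_adjE.
move: (lit _ xS) (lit _ yS) (lit _ zS).
case: x {xS} => // ? ?; case: y {yS} => // ? ?; case: z {zS} => // ? ? _ _ _ /=.
decide_constraints.
Qed.

End LocallyCyclicSet.

Section Window.
Variables (n : nat) (v : 'I_n -> V).
Hypothesis n_ge5 : 4 < n.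
Hypothesis v_lit_or_clause : {in codom v, forall x, is_lit x || is_clause x}.
Local Notation w := (walk v n_ge5).

Let w_lit_or_clause m : is_lit (w m) || is_clause (w m) :=
  v_lit_or_clause (walk_codom v n_ge5 m).

(* The cycle-neighbours of a clause vertex are complementary literals l, ~l.
   The vertex after ~l is a clause vertex (a literal adjacent to ~l is
   adjacent to l), and the one after it is forced to be l again, although it
   is at distance four from l on the cycle. *)
Lemma hole_no_clause j : induced_cycle G v -> VC j \notin codom v.
Proof.
move=> v_cycle; apply/negP => /codomP[i].
rewrite -(walk_ord _ n_ge5) (walk_pred _ n_ge5); set k := _ + _ => wk1.
have adj1 := walk_adj1 n_ge5 v_cycle; have nadj2 := walk_nadj2 n_ge5 v_cycle.
have nadj3 := walk_nadj3 n_ge5 v_cycle; have neq := walk_neq n_ge5 v_cycle.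
have := adj1 k; rewrite (walkC n_ge5 v_cycle).
move: (adj1 k.+1) (adj1 k.+2) (adj1 k.+3) (nadj2 k) (nadj3 k) (nadj2 k.+2).
move: (neq k 2 isT) (neq k.+2 2 isT) (neq k 4 isT).
move: (w_lit_or_clause k) (w_lit_or_clause k.+2).
move: (w_lit_or_clause k.+3) (w_lit_or_clause k.+4); rewrite -wk1.
case: (w k) => // i0 b0; case: (w k.+2) => // i2 b2.
case: (w k.+4) => // [i4 b4|j4]; case: (w k.+3) => // [i3 b3|j3] _ _ _ _.
all: rewrite !G_adjE ?eq_VLit /=; decide_constraints.
Qed.

(* The vertices at distance 2 and 3 after a clause vertex are adjacent to it,
   hence literals, and consecutive, hence complementary: l, ~l. The vertex
   after ~l is non-adjacent to ~l but adjacent to l, hence a clause vertex.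
   The vertex at distance 1 after the first clause vertex is adjacent to that
   one, hence a literal, non-adjacent to l yet adjacent to ~l: impossible. *)
Lemma antihole_no_clause j : induced_cycle (compl_rel G) v -> VC j \notin codom v.
Proof.
move=> v_cocycle; apply/negP => /codomP[k]; rewrite -(walk_ord _ n_ge5) => wk.
have nadj1 := antiwalk_nadj1 n_ge5 v_cocycle.
have adj2 := antiwalk_adj2 n_ge5 v_cocycle; have adj3 := antiwalk_adj3 n_ge5 v_cocycle.
move: (adj2 k) (adj3 k) (nadj1 k.+2) (nadj1 k.+3) (adj2 k.+2).
move: (adj3 k.+1) (nadj1 k.+1) (adj2 k.+1).
move: (w_lit_or_clause k.+1) (w_lit_or_clause k.+2).
move: (w_lit_or_clause k.+3) (w_lit_or_clause k.+4); rewrite -wk.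
case: (w k.+2) => // i2 b2; case: (w k.+3) => // i3 b3.
case: (w k.+1) => // [i1 b1|j1]; case: (w k.+4) => // [i4 b4|j4] _ _ _ _.
all: rewrite !G_adjE /=; decide_constraints.
Qed.

End Window.

Lemma no_hole : ~ has_induced_cycle_ge5 G.
Proof.
case=> n [v [n_ge5 v_cycle]].
have v_cyclic := hole_locally_cyclic n_ge5 v_cycle.
have [j] := locally_cyclic_has_clause v_cyclic (walk_codom v n_ge5 0).
have v_lit_or_clause := locally_cyclic_lit_or_clause v_cyclic.
by apply/negP; apply: hole_no_clause v_lit_or_clause _ v_cycle.
Qed.

Lemma no_antihole : ~ has_induced_cycle_ge5 (compl_rel G).
Proof.
case=> n [v [n_ge5 v_cocycle]].
have v_cyclic := antihole_locally_cyclic n_ge5 v_cocycle.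
have [j] := locally_cyclic_has_clause v_cyclic (walk_codom v n_ge5 0).
have v_lit_or_clause := locally_cyclic_lit_or_clause v_cyclic.
by apply/negP; apply: antihole_no_clause v_lit_or_clause _ v_cocycle.
Qed.

End GraphOfInstance.

Theorem lemma8 (I : sat3_instance) : weakly_chordal (G_adj I).
Proof. split; [exact: no_hole | exact: no_antihole]. Qed.
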